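(* Let $E=(E^0,E^1,r,s)$ be a graph and $H\subseteq E^0$ a saturated hereditary subset. Then $|\widetilde{\partial}E|=|\widetilde{\partial}\,\overline{E}_{(H,\emptyset)}|+|\widetilde{\partial}\,(E\setminus(H,\emptyset))|$.
   Context: A graph $E=(E^0,E^1,r,s)$ has vertex set $E^0$, edge set $E^1$, range and source maps; no countability assumed. A vertex is singular if it emits no edges or infinitely many edges, regular otherwise. Boundary paths $\partial E$: infinite paths $e_1e_2\cdots$ ($r(e_i)=s(e_{i+1})$) together with finite paths (including vertices as length-$0$ paths) whose range is singular. The shift $\sigma_E$ removes the first edge (fixes vertices; sends a single edge $e$ to $r(e)$); $\alpha,\beta\in\partial E$ are shift-tail equivalent if $\sigma_E^m(\alpha)=\sigma_E^n(\beta)$ for some $m,n\in\mathbb{N}$, and $\widetilde{\partial}E$ is the set of shift-tail equivalence classes. $H\subseteq E^0$ is hereditary if $s(e)\in H\Rightarrow r(e)\in H$; saturated if every regular $v$ with $r(s^{-1}(v))\subseteq H$ lies in $H$. Breaking vertices: $B_H=\{v\in E^0\text{ singular}:0<|s^{-1}(v)\cap r^{-1}(E^0\setminus H)|<\infty\}$. The graph $E\setminus(H,\emptyset)$ has vertex set $(E^0\setminus H)\sqcup\{w_v:v\in B_H\}$ and edge set $(E^1\setminus r^{-1}(H))\sqcup\{f_e:e\in E^1,\ r(e)\in B_H\}$, with $r,s$ as in $E$ on the old edges, and $s(f_e)=s(e)$, $r(f_e)=w_{r(e)}$. Let $F_1(H,\emptyset)=\{\alpha=e_1\cdots e_n\in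 E^*: n\ge1,\ r(e_n)\in H,\ s(e_n)\notin H\}$ and let $\overline{F}_1(H,\emptyset)=\{\overline{\alpha}:\alpha\in F_1(H,\emptyset)\}$ be a disjoint copy. The graph $\overline{E}_{(H,\emptyset)}$ has vertex set $H\sqcup F_1(H,\emptyset)$ and edge set $\{e\in E^1:s(e)\in H\}\sqcup\overline{F}_1(H,\emptyset)$, with $r,s$ as in $E$ on the edges from $E$, and $s(\overline{\alpha})=\alpha$, $r(\overline{\alpha})=r(\alpha)$. *)

From Stdlib Require Import List Arith.
Import ListNotations.

Record graph := Graph {
  V : Type;
  Ed : Type;
  rg : Ed -> V;
  sr : Ed -> V
}.

Section GraphDefs.
Variable G : graph.

Definition regular (v : V G) : Prop :=
  (exists e : Ed G, sr G e = v) /\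
  (exists l : list (Ed G), forall e, sr G e = v -> In e l).

Definition singular (v : V G) : Prop := ~ regular v.

Definition hereditary (H : V G -> Prop) : Prop :=
  forall e : Ed G, H (sr G e) -> H (rg G e).

Definition saturated (H : V G -> Prop) : Prop :=
  forall v : V G, regular v -> (forall e, sr G e = v -> H (rg G e)) -> H v.

Definition breaking (H : V G -> Prop) (v : V G) : Prop :=
  singular v /\
  (exists e, sr G e = v /\ ~ H (rg G e)) /\
  (exists l : list (Ed G), forall e, sr G e = v -> ~ H (rg G e) -> In e l).

Fixpoint consec (e : Ed G) (l : list (Ed G)) : Prop :=
  match l with
  | [] => True
  | e' :: l' => rg G e = sr G e' /\ consec e' l'
  end.

(* raw paths: vertices (length 0), finite paths e::l of length >= 1, infinite paths *)
Inductive rpath : Type :=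
| rvert : V G -> rpath
| rfin : Ed G -> list (Ed G) -> rpath
| rinf : (nat -> Ed G) -> rpath.

Definition is_boundary (a : rpath) : Prop :=
  match a with
  | rvert v => singular v
  | rfin e l => consec e l /\ singular (rg G (last l e))
  | rinf f => forall n, rg G (f n) = sr G (f (S n))
  end.

Definition shift (a : rpath) : rpath :=
  match a with
  | rvert v => rvert v
  | rfin e [] => rvert (rg G e)
  | rfin _ (e' :: l) => rfin e' l
  | rinf f => rinf (fun n => f (S n))
  end.

Definition shift_tail_eq (a b : rpath) : Prop :=
  exists m n : nat, Nat.iter m shift a = Nat.iter n shift b.

(* shift-tail equivalence classes of boundary paths, as sets of boundary paths *)
Definition bclass : Type :=
  { P : rpath -> Prop |
    exists a, is_boundary a /\ P = (fun b => is_boundary b /\ shift_tail_eq a b) }.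

Definition F1 (H : V G -> Prop) (p : Ed G * list (Ed G)) : Prop :=
  consec (fst p) (snd p) /\ H (rg G (last (snd p) (fst p)))
  /\ ~ H (sr G (last (snd p) (fst p))).

End GraphDefs.

Arguments rvert {G}. Arguments rfin {G}. Arguments rinf {G}.

Section Quot.
Variables (E : graph) (H : V E -> Prop) (hH : hereditary E H).

Definition Q_V : Type := ({v : V E | ~ H v} + {v : V E | breaking E H v})%type.
Definition Q_Ed : Type :=
  ({e : Ed E | ~ H (rg E e)} + {e : Ed E | breaking E H (rg E e)})%type.

Lemma Q_src_ok1 (e : Ed E) : ~ H (rg E e) -> ~ H (sr E e).
Proof. intros h1 h2. apply h1. apply hH. exact h2. Qed.

Lemma Q_src_ok2 (e : Ed E) : breaking E H (rg E e) -> ~ H (sr E e).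
Proof.
  intros [_ [[e' [he' hne']] _]] h. apply Q_src_ok1 with e; [|exact h].
  intro hr. apply hne'. apply hH. rewrite he'. exact hr.
Qed.

Definition Q_rg (x : Q_Ed) : Q_V :=
  match x with
  | inl (exist _ e p) => inl (exist _ (rg E e) p)
  | inr (exist _ e p) => inr (exist _ (rg E e) p)   (* r(f_e) = w_{r(e)} *)
  end.

Definition Q_sr (x : Q_Ed) : Q_V :=
  match x with
  | inl (exist _ e p) => inl (exist _ (sr E e) (Q_src_ok1 e p))
  | inr (exist _ e p) => inl (exist _ (sr E e) (Q_src_ok2 e p))
  end.

Definition EminusH : graph := Graph Q_V Q_Ed Q_rg Q_sr.

Definition B_V : Type :=
  ({v : V E | H v} + {p : Ed E * list (Ed E) | F1 E H p})%type.
Definition B_Ed : Type :=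
  ({e : Ed E | H (sr E e)} + {p : Ed E * list (Ed E) | F1 E H p})%type.

Definition B_rg (x : B_Ed) : B_V :=
  match x with
  | inl (exist _ e p) => inl (exist _ (rg E e) (hH e p))
  | inr (exist _ a p) => inl (exist _ (rg E (last (snd a) (fst a))) (proj1 (proj2 p)))
  end.

Definition B_sr (x : B_Ed) : B_V :=
  match x with
  | inl (exist _ e p) => inl (exist _ (sr E e) p)
  | inr a => inr a
  end.

Definition Ebar : graph := Graph B_V B_Ed B_rg B_sr.

End Quot.

Definition card_eq (A B : Type) : Prop :=
  exists f : A -> B, (forall x y, f x = f y -> x = y) /\ (forall y, exists x, f x = y).

(* Both graphs map to E by graph morphisms: on Ebar the vertex alpha goes to s(e_n), the
   edge alpha-bar to e_n, and vertices of H and edges from H go to themselves; on E\(H,∅)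
   the vertex w_v goes to v and the edge f_e to e.  Such morphisms commute with the shift,
   so they induce maps on shift-tail classes of boundary paths, and both are injective: in
   E\(H,∅) the only collisions (w_v with v, f_e with e, for v breaking) are impossible at
   the end of a boundary path because v is regular there, and in Ebar two paths with the
   same image agree after their first edge.  As H is hereditary, "eventually in H" is an
   invariant of shift-tail classes in E; it holds on the image of Ebar, fails on the image
   of E\(H,∅), and every boundary path of E is tail equivalent to a path in one of the two
   images.  Saturation is what makes singular vertices of E\(H,∅) lie over singular
   vertices of E, so that boundary paths are sent to boundary paths. *)

From Stdlib Require Import List Arith Lia Classical ClassicalEpsilon FunctionalExtensionality
  PropExtensionality ProofIrrelevance RelationClasses.
Import ListNotations.

Definition finite {X : Type} (P : X -> Prop) : Prop := exists l, forall x, P x -> In x l.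

Definition injective_on {X Y : Type} (P : X -> Prop) (f : X -> Y) : Prop :=
  forall x y, P x -> P y -> f x = f y -> x = y.

Lemma injective_on_mono {X Y : Type} (P Q : X -> Prop) (f : X -> Y) :
  injective_on P f -> (forall x, Q x -> P x) -> injective_on Q f.
Proof. intros hf hQP x y hx hy. apply hf; auto. Qed.

Definition is_inl {X Y : Type} (s : X + Y) : Prop := exists x, s = inl x.

Lemma finite_mono {X : Type} (P Q : X -> Prop) :
  finite P -> (forall x, Q x -> P x) -> finite Q.
Proof. intros [l hl] hQP. exists l. auto. Qed.

Lemma finite_preimage {X Y : Type} (g : Y -> X) (P : X -> Prop) (Q : Y -> Prop) :
  finite P -> (forall y, Q y -> P (g y)) ->
  (forall x, finite (fun y => Q y /\ g y = x)) -> finite Q.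
Proof.
  intros [l hl] hQP hfib.
  assert (hpre : exists l', forall y, Q y -> In (g y) l -> In y l').
  { clear hl. induction l as [|x l [l' hl']].
    - exists []. intros y _ [].
    - destruct (hfib x) as [lx hlx]. exists (lx ++ l').
      intros y hy [hx|hin]; apply in_or_app; [left|right]; auto. }
  destruct hpre as [l' hl']. exists l'. auto.
Qed.

Lemma map_injective_on {X Y : Type} (P : X -> Prop) (f : X -> Y) (l l' : list X) :
  injective_on P f -> Forall P l -> Forall P l' -> map f l = map f l' -> l = l'.
Proof.
  intros hf hl. revert l'. induction hl as [|x l hx hl IH]; intros [|y l'] hl' heq;
    try discriminate; [reflexivity|].
  inversion hl' as [|? ? hy hl'0]; subst. injection heq as hxy heq.
  f_equal; auto.
Qed.

Lemma last_cons {A : Type} (a d : A) (l : list A) : last (a :: l) d = last l a.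
Proof.
  revert a d; induction l as [|b l IH]; intros a d; [reflexivity|].
  change (last (b :: l) d = last (b :: l) a). rewrite !IH. reflexivity.
Qed.

Lemma last_map {A B : Type} (f : A -> B) (a : A) (l : list A) :
  last (map f l) (f a) = f (last l a).
Proof.
  revert a; induction l as [|b l IH]; intro a; [reflexivity|].
  cbn [map]. rewrite !last_cons. apply IH.
Qed.

Lemma card_eq_sym (X Y : Type) : card_eq X Y -> card_eq Y X.
Proof.
  intros [g [ginj gsur]].
  exists (fun y => proj1_sig (constructive_indefinite_description _ (gsur y))). split.
  - intros y y'.
    destruct (constructive_indefinite_description _ (gsur y)) as [x <-].
    destruct (constructive_indefinite_description _ (gsur y')) as [x' <-].
    cbn. congruence.
  - intro x. exists (g x).
    destruct (constructive_indefinite_description _ (gsur (g x))) as [x' hx'].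
    cbn. auto.
Qed.

Section Classes.
Variables (A : Type) (dom : A -> Prop) (R : A -> A -> Prop).
Context {R_equiv : Equivalence R}.

Definition classes : Type :=
  {P : A -> Prop | exists a, dom a /\ P = (fun b => dom b /\ R a b)}.

Definition class_of (a : A) (ha : dom a) : classes :=
  exist _ (fun b => dom b /\ R a b) (ex_intro _ a (conj ha eq_refl)).

Lemma class_of_eq a a' (ha : dom a) (ha' : dom a') :
  class_of a ha = class_of a' ha' <-> R a a'.
Proof.
  split.
  - intro e. apply (f_equal (fun P => proj1_sig P a')) in e. cbn in e.
    assert (h : dom a' /\ R a a') by (rewrite e; split; [exact ha'|reflexivity]).
    apply h.
  - intro r. apply subset_eq_compat. extensionality b. apply propositional_extensionality.
    split; intros [hb r']; split; auto; [rewrite <- r|rewrite r]; exact r'.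
Qed.

Lemma classes_rep (P : classes) : exists a (ha : dom a), P = class_of a ha.
Proof.
  destruct P as [P hP]. destruct hP as [a [ha eP]]. exists a, ha.
  apply subset_eq_compat. exact eP.
Qed.

End Classes.

Arguments class_of {A dom R} a ha.
Arguments class_of_eq {A dom R R_equiv} a a' ha ha'.
Arguments classes_rep {A dom R} P.

Section ClassMap.
Variables (A B : Type) (dA : A -> Prop) (dB : B -> Prop)
  (RA : A -> A -> Prop) (RB : B -> B -> Prop).
Context {RA_equiv : Equivalence RA} {RB_equiv : Equivalence RB}.
Variable p : B -> A.
Hypothesis p_dom : forall b, dB b -> dA (p b).
Hypothesis p_preserves : forall b b', dB b -> dB b' -> RB b b' -> RA (p b) (p b').

Definition class_image (P : B -> Prop) (a : A) : Prop :=
  dA a /\ exists b, P b /\ RA (p b) a.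

Lemma class_image_of b (hb : dB b) :
  class_image (fun b' => dB b' /\ RB b b') = (fun a => dA a /\ RA (p b) a).
Proof.
  extensionality a. apply propositional_extensionality. split.
  - intros [ha [b' [[hb' r] r']]]. split; [exact ha|].
    transitivity (p b'); auto.
  - intros [ha r]. split; [exact ha|].
    exists b. split; [split; [exact hb|reflexivity]|exact r].
Qed.

Lemma class_image_is_class (P : classes B dB RB) :
  exists a, dA a /\ class_image (proj1_sig P) = (fun a' => dA a' /\ RA a a').
Proof.
  destruct P as [P [b [hb ->]]]. exists (p b). split; [auto|]. apply class_image_of, hb.
Qed.

Definition class_map (P : classes B dB RB) : classes A dA RA :=
  exist _ (class_image (proj1_sig P)) (class_image_is_class P).

Lemma class_map_of b (hb : dB b) : class_map (class_of b hb) = class_of (p b) (p_dom b hb).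
Proof. apply subset_eq_compat. apply class_image_of, hb. Qed.

End ClassMap.

Arguments class_map {A B dA dB RA RB RA_equiv RB_equiv} p {p_dom p_preserves} P.

Section ClassSum.
Variables (A B1 B2 : Type) (dA : A -> Prop) (dB1 : B1 -> Prop) (dB2 : B2 -> Prop)
  (RA : A -> A -> Prop) (RB1 : B1 -> B1 -> Prop) (RB2 : B2 -> B2 -> Prop).
Context {RA_equiv : Equivalence RA} {RB1_equiv : Equivalence RB1}
  {RB2_equiv : Equivalence RB2}.
Variables (p1 : B1 -> A) (p2 : B2 -> A).
Hypotheses (p1_dom : forall b, dB1 b -> dA (p1 b))
  (p2_dom : forall b, dB2 b -> dA (p2 b)).
Hypotheses
  (p1_equiv : forall b b', dB1 b -> dB1 b' -> RB1 b b' <-> RA (p1 b) (p1 b'))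
  (p2_equiv : forall b b', dB2 b -> dB2 b' -> RB2 b b' <-> RA (p2 b) (p2 b')).
Hypothesis images_disjoint : forall b b', dB1 b -> dB2 b' -> ~ RA (p1 b) (p2 b').
Hypothesis images_cover : forall a, dA a ->
  (exists b, dB1 b /\ RA a (p1 b)) \/ (exists b, dB2 b /\ RA a (p2 b)).

Lemma card_eq_classes_sum :
  card_eq (classes A dA RA) (classes B1 dB1 RB1 + classes B2 dB2 RB2)%type.
Proof.
  apply card_eq_sym.
  pose (p1_preserves b b' hb hb' := proj1 (p1_equiv b b' hb hb')).
  pose (p2_preserves b b' hb hb' := proj1 (p2_equiv b b' hb hb')).
  exists (fun s => match s with
                   | inl P => class_map p1 (p_dom := p1_dom) (p_preserves := p1_preserves) P
                   | inr P => class_map p2 (p_dom := p2_dom) (p_preserves := p2_preserves) P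
                   end).
  split.
  - intros [P|P] [P'|P'];
      destruct (classes_rep P) as [b [hb ->]], (classes_rep P') as [b' [hb' ->]];
      rewrite !class_map_of, class_of_eq; intro r.
    + f_equal. apply class_of_eq. apply p1_equiv; auto.
    + exfalso. exact (images_disjoint b b' hb hb' r).
    + exfalso. exact (images_disjoint b' b hb' hb (symmetry r)).
    + f_equal. apply class_of_eq. apply p2_equiv; auto.
  - intro Q. destruct (classes_rep Q) as [a [ha ->]].
    destruct (images_cover a ha) as [[b [hb r]]|[b [hb r]]];
      [exists (inl (class_of b hb))|exists (inr (class_of b hb))];
      rewrite class_map_of; apply class_of_eq; symmetry; exact r.
Qed.

End ClassSum.

Section Paths.
Variable G : graph.

Lemma shift_boundary a : is_boundary G a -> is_boundary G (shift G a).
Proof.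
  destruct a as [v|e [|e' l]|f]; cbn; auto.
  - intros [_ hs]. exact hs.
  - intros [[_ hc] hs]. split; [exact hc|]. rewrite <- (last_cons e' e). exact hs.
Qed.

Lemma iter_shift_boundary n a : is_boundary G a -> is_boundary G (Nat.iter n (shift G) a).
Proof. apply Nat.iter_invariant, shift_boundary. Qed.

Global Instance shift_tail_eq_equiv : Equivalence (shift_tail_eq G).
Proof.
  split.
  - intro a. exists 0, 0. reflexivity.
  - intros a b [m [n h]]. exists n, m. auto.
  - intros a b c [m [n h]] [p [q h']]. exists (p + m), (n + q).
    rewrite !Nat.iter_add, h, <- h', <- !Nat.iter_add, Nat.add_comm. reflexivity.
Qed.

Lemma shift_tail_eq_iter a n : shift_tail_eq G a (Nat.iter n (shift G) a).
Proof. exists n, 0. reflexivity. Qed.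

Lemma iter_shift_rfin e l :
  Nat.iter (S (length l)) (shift G) (rfin e l) = rvert (rg G (last l e)).
Proof.
  revert e; induction l as [|e' l IH]; intro e; [reflexivity|].
  rewrite Nat.iter_succ_r. cbn [shift length]. rewrite IH, last_cons. reflexivity.
Qed.

Lemma iter_shift_rinf f n : Nat.iter n (shift G) (rinf f) = rinf (fun k => f (k + n)).
Proof.
  induction n as [|n IH].
  - cbn. f_equal. extensionality k. f_equal. lia.
  - rewrite Nat.iter_succ, IH. cbn. f_equal. extensionality k. f_equal. lia.
Qed.

End Paths.

Definition emits (G : graph) (v : V G) : Prop := exists e, sr G e = v.
Definition receives (G : graph) (v : V G) : Prop := exists e, rg G e = v.

Lemma consec_sources_receive (G : graph) e l :
  consec G e l -> Forall (fun x => receives G (sr G x)) l.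
Proof.
  revert e; induction l as [|x l IH]; intros e hc; constructor.
  - exists e. apply hc.
  - apply (IH x), hc.
Qed.

Section Morphism.
Variables (G1 G2 : graph) (vmap : V G1 -> V G2) (emap : Ed G1 -> Ed G2).
Hypotheses (rg_map : forall e, vmap (rg G1 e) = rg G2 (emap e))
           (sr_map : forall e, vmap (sr G1 e) = sr G2 (emap e)).

Definition path_map (a : rpath G1) : rpath G2 :=
  match a with
  | rvert v => rvert (vmap v)
  | rfin e l => rfin (emap e) (map emap l)
  | rinf f => rinf (fun n => emap (f n))
  end.

Lemma path_map_shift a : path_map (shift G1 a) = shift G2 (path_map a).
Proof. destruct a as [v|e [|e' l]|f]; cbn; rewrite ?rg_map; reflexivity. Qed.

Lemma path_map_iter n a :
  path_map (Nat.iter n (shift G1) a) = Nat.iter n (shift G2) (path_map a).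
Proof. apply Nat.iter_swap_gen, path_map_shift. Qed.

Lemma consec_map e l : consec G1 e l -> consec G2 (emap e) (map emap l).
Proof.
  revert e; induction l as [|x l IH]; intros e; cbn; [auto|].
  intros [he hc]. split; [|auto]. rewrite <- rg_map, <- sr_map, he. reflexivity.
Qed.

Lemma path_map_boundary
  (singular_map : forall v, singular G1 v -> singular G2 (vmap v)) a :
  is_boundary G1 a -> is_boundary G2 (path_map a).
Proof.
  destruct a as [v|e l|f]; cbn.
  - apply singular_map.
  - intros [hc hs]. split; [apply consec_map, hc|].
    rewrite last_map, <- rg_map. apply singular_map, hs.
  - intros hf n. rewrite <- rg_map, <- sr_map, hf. reflexivity.
Qed.

Lemma path_map_shift_tail_eq a b :
  shift_tail_eq G1 a b -> shift_tail_eq G2 (path_map a) (path_map b).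
Proof. intros [m [n h]]. exists m, n. rewrite <- !path_map_iter, h. reflexivity. Qed.

Lemma shift_tail_eq_of_path_map
  (tail_inj : forall x y, is_boundary G1 x -> is_boundary G1 y ->
     path_map x = path_map y -> shift_tail_eq G1 x y) a b :
  is_boundary G1 a -> is_boundary G1 b ->
  shift_tail_eq G2 (path_map a) (path_map b) -> shift_tail_eq G1 a b.
Proof.
  intros ha hb [m [n h]]. rewrite <- !path_map_iter in h.
  apply tail_inj in h; try apply iter_shift_boundary; auto.
  rewrite (shift_tail_eq_iter G1 a m), (shift_tail_eq_iter G1 b n). exact h.
Qed.

Lemma consec_map_injective
  (emap_inj_emitting : injective_on (fun e => emits G1 (rg G1 e)) emap)
  (emap_inj_singular : injective_on (fun e => singular G1 (rg G1 e)) emap) e e' l l' :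
  consec G1 e l -> consec G1 e' l' ->
  singular G1 (rg G1 (last l e)) -> singular G1 (rg G1 (last l' e')) ->
  emap e = emap e' -> map emap l = map emap l' -> e = e' /\ l = l'.
Proof.
  revert e e' l'; induction l as [|x l IH]; intros e e' [|x' l'] hc hc' hs hs' he hl;
    try discriminate.
  - split; [apply emap_inj_singular; auto|reflexivity].
  - destruct hc as [hx hc], hc' as [hx' hc']. injection hl as hxx' hl.
    rewrite last_cons in hs, hs'.
    destruct (IH x x' l' hc hc' hs hs' hxx' hl) as [<- <-]. split; [|reflexivity].
    apply emap_inj_emitting; [exists x|exists x|]; auto.
Qed.

Lemma path_map_injective
  (emap_inj_emitting : injective_on (fun e => emits G1 (rg G1 e)) emap)
  (emap_inj_singular : injective_on (fun e => singular G1 (rg G1 e)) emap)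
  (vmap_inj_singular : injective_on (singular G1) vmap) x y :
  is_boundary G1 x -> is_boundary G1 y -> path_map x = path_map y -> x = y.
Proof.
  destruct x as [u|e l|f], y as [u'|e' l'|f']; cbn; intros hx hy h; try discriminate.
  - injection h as h. f_equal. apply vmap_inj_singular; auto.
  - injection h as he hl. destruct hx, hy.
    destruct (consec_map_injective emap_inj_emitting emap_inj_singular e e' l l')
      as [<- <-]; auto.
  - injection h as h. f_equal. extensionality n.
    apply emap_inj_emitting; [exists (f (S n))|exists (f' (S n))|]; auto.
    exact (equal_f h n).
Qed.

Lemma path_map_shift_injective
  (emap_inj_receiving : injective_on (fun e => receives G1 (sr G1 e)) emap)
  (vmap_inj_receiving : injective_on (receives G1) vmap)
  (vmap_inj_singular : injective_on (singular G1) vmap) x y :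
  is_boundary G1 x -> is_boundary G1 y -> path_map x = path_map y ->
  shift G1 x = shift G1 y.
Proof.
  destruct x as [u|e l|f], y as [u'|e' l'|f']; cbn; intros hx hy h; try discriminate.
  - injection h as h. f_equal. apply vmap_inj_singular; auto.
  - injection h as he hl. destruct hx as [hc _], hy as [hc' _].
    destruct l as [|x l], l' as [|x' l']; try discriminate.
    + f_equal. apply vmap_inj_receiving; [exists e|exists e'|]; auto.
      rewrite !rg_map, he. reflexivity.
    + assert (x :: l = x' :: l') as hxl.
      { apply (map_injective_on _ emap _ _ emap_inj_receiving);
          [exact (consec_sources_receive G1 e _ hc)
          |exact (consec_sources_receive G1 e' _ hc')
          |exact hl]. }
      injection hxl as <- <-. reflexivity.
  - injection h as h. f_equal. extensionality n.
    apply emap_inj_receiving; [exists (f n)|exists (f' n)|]; auto.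
    exact (equal_f h (S n)).
Qed.

End Morphism.

Section Ebar.
Variables (E : graph) (H : V E -> Prop) (hH : hereditary E H).

Definition bar_vmap (x : B_V E H) : V E :=
  match x with
  | inl v => proj1_sig v
  | inr a => sr E (last (snd (proj1_sig a)) (fst (proj1_sig a)))
  end.

Definition bar_emap (x : B_Ed E H) : Ed E :=
  match x with
  | inl e => proj1_sig e
  | inr a => last (snd (proj1_sig a)) (fst (proj1_sig a))
  end.

Lemma bar_rg_map (x : Ed (Ebar E H hH)) : bar_vmap (rg _ x) = rg E (bar_emap x).
Proof. destruct x as [[e he]|[a ha]]; reflexivity. Qed.

Lemma bar_sr_map (x : Ed (Ebar E H hH)) : bar_vmap (sr _ x) = sr E (bar_emap x).
Proof. destruct x as [[e he]|[a ha]]; reflexivity. Qed.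

Lemma Ebar_regular_inr a : regular (Ebar E H hH) (inr a).
Proof.
  split.
  - exists (inr a). reflexivity.
  - exists [inr a]. intros [[e he]|b] hb; cbn in hb; [discriminate|]. left. congruence.
Qed.

Lemma Ebar_singular_map x : singular (Ebar E H hH) x -> singular E (bar_vmap x).
Proof.
  intros hs hreg. apply hs. destruct x as [[v hv]|a]; [|apply Ebar_regular_inr].
  destruct hreg as [[e he] hfin]. split.
  - assert (hse : H (sr E e)) by (rewrite he; exact hv).
    exists (inl (exist _ e hse)). cbn. f_equal. apply subset_eq_compat. exact he.
  - apply (finite_preimage bar_emap _ _ hfin).
    + intros y hy. rewrite <- bar_sr_map, hy. reflexivity.
    + intro e'. destruct (classic (H (sr E e'))) as [he'|nhe'].
      * exists [inl (exist _ e' he')].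
        intros [[e'' he'']|b] [hy <-]; cbn in *; [|discriminate].
        left. f_equal. apply subset_eq_compat. reflexivity.
      * exists []. intros [[e'' he'']|b] [hy <-]; cbn in *; [contradiction|discriminate].
Qed.

Lemma Ebar_singular_inl v (hv : H v) :
  singular E v -> singular (Ebar E H hH) (inl (exist _ v hv)).
Proof.
  intros hs [[x hx] [l hl]]. apply hs. split.
  - destruct x as [[e he]|a]; cbn in hx; [|discriminate].
    injection hx as hx. exists e. exact hx.
  - exists (map bar_emap l). intros e he.
    assert (hse : H (sr E e)) by (rewrite he; exact hv).
    change e with (bar_emap (inl (exist _ e hse))). apply in_map, hl.
    cbn. f_equal. apply subset_eq_compat. exact he.
Qed.

Lemma Ebar_receives_is_inl v : receives (Ebar E H hH) v -> is_inl v.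
Proof. intros [[[e he]|[a ha]] <-]; eexists; reflexivity. Qed.

Lemma Ebar_singular_is_inl v : singular (Ebar E H hH) v -> is_inl v.
Proof.
  destruct v as [u|a]; intro hs; [exists u; reflexivity|].
  exfalso. exact (hs (Ebar_regular_inr a)).
Qed.

Lemma bar_vmap_injective : injective_on is_inl bar_vmap.
Proof.
  intros x y [[u hu] ->] [[u' hu'] ->] h. cbn in h. subst u'.
  f_equal. apply subset_eq_compat. reflexivity.
Qed.

Lemma bar_emap_injective :
  injective_on (fun x => receives (Ebar E H hH) (sr _ x)) bar_emap.
Proof.
  intros x y hx hy h.
  destruct (Ebar_receives_is_inl _ hx) as [u hu], (Ebar_receives_is_inl _ hy) as [u' hu'].
  destruct x as [[e he]|a], y as [[e' he']|a']; cbn in *; try discriminate.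
  subst e'. f_equal. apply subset_eq_compat. reflexivity.
Qed.

Definition bar_path_map : rpath (Ebar E H hH) -> rpath E :=
  path_map (Ebar E H hH) E bar_vmap bar_emap.

Lemma Ebar_path_map_boundary b :
  is_boundary (Ebar E H hH) b -> is_boundary E (bar_path_map b).
Proof.
  apply path_map_boundary; [exact bar_rg_map|exact bar_sr_map|exact Ebar_singular_map].
Qed.

Lemma Ebar_path_map_equiv b b' :
  is_boundary (Ebar E H hH) b -> is_boundary (Ebar E H hH) b' ->
  shift_tail_eq _ b b' <->
  shift_tail_eq E (bar_path_map b) (bar_path_map b').
Proof.
  intros hb hb'. split; [apply path_map_shift_tail_eq, bar_rg_map|].
  apply shift_tail_eq_of_path_map; auto; [exact bar_rg_map|].
  (* Different alpha with the same last edge have the same image: only the first edge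
     of a path is lost. *)
  intros x y hx hy h. exists 1, 1.
  apply (path_map_shift_injective (Ebar E H hH) E bar_vmap bar_emap bar_rg_map); auto.
  - exact bar_emap_injective.
  - apply (injective_on_mono _ _ _ bar_vmap_injective), Ebar_receives_is_inl.
  - apply (injective_on_mono _ _ _ bar_vmap_injective), Ebar_singular_is_inl.
Qed.

End Ebar.

Section EminusH.
Variables (E : graph) (H : V E -> Prop) (hH : hereditary E H).

Definition minus_vmap (x : Q_V E H) : V E :=
  match x with inl v => proj1_sig v | inr v => proj1_sig v end.

Definition minus_emap (x : Q_Ed E H) : Ed E :=
  match x with inl e => proj1_sig e | inr e => proj1_sig e end.

Definition minus_path_map : rpath (EminusH E H hH) -> rpath E :=
  path_map (EminusH E H hH) E minus_vmap minus_emap.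

Lemma minus_rg_map (x : Ed (EminusH E H hH)) : minus_vmap (rg _ x) = rg E (minus_emap x).
Proof. destruct x as [[e he]|[e he]]; reflexivity. Qed.

Lemma minus_sr_map (x : Ed (EminusH E H hH)) : minus_vmap (sr _ x) = sr E (minus_emap x).
Proof. destruct x as [[e he]|[e he]]; reflexivity. Qed.

Lemma breaking_notin v : breaking E H v -> ~ H v.
Proof. intros [_ [[e [<- he]] _]] hv. exact (he (hH e hv)). Qed.

Lemma minus_vmap_notin x : ~ H (minus_vmap x).
Proof. destruct x as [[v hv]|[v hv]]; [exact hv|exact (breaking_notin v hv)]. Qed.

Lemma minus_emap_fibers_finite e : finite (fun x => minus_emap x = e).
Proof.
  destruct (classic (H (rg E e))) as [he|nhe].
  - exists []. intros [[e' he']|[e' he']] <-; cbn in *.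
    + exact (he' he).
    + exact (breaking_notin _ he' he).
  - destruct (classic (breaking E H (rg E e))) as [hb|nhb].
    + exists [inl (exist _ e nhe); inr (exist _ e hb)].
      intros [[e' he']|[e' he']] <-; cbn; [left|right; left];
        f_equal; apply subset_eq_compat; reflexivity.
    + exists [inl (exist _ e nhe)].
      intros [[e' he']|[e' he']] <-; cbn; [|contradiction].
      left. f_equal. apply subset_eq_compat. reflexivity.
Qed.

Lemma EminusH_regular_inl v (hv : ~ H v) :
  (exists e, sr E e = v /\ ~ H (rg E e)) ->
  finite (fun e => sr E e = v /\ ~ H (rg E e)) ->
  regular (EminusH E H hH) (inl (exist _ v hv)).
Proof.
  intros [e [<- he]] hfin. split.
  - exists (inl (exist _ e he)). cbn. f_equal. apply subset_eq_compat. reflexivity.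
  - apply (finite_preimage minus_emap _ _ hfin).
    + intros y hy. split.
      * rewrite <- minus_sr_map, hy. reflexivity.
      * rewrite <- minus_rg_map. apply minus_vmap_notin.
    + intro e'. apply (finite_mono _ _ (minus_emap_fibers_finite e')). tauto.
Qed.

Lemma EminusH_regular_breaking v (hv : ~ H v) :
  breaking E H v -> regular (EminusH E H hH) (inl (exist _ v hv)).
Proof. intros [_ [hex hfin]]. apply EminusH_regular_inl; [exact hex|]. firstorder. Qed.

Lemma EminusH_singular_map (sH : saturated E H) x :
  singular (EminusH E H hH) x -> singular E (minus_vmap x).
Proof.
  destruct x as [[v hv]|[v hv]]; cbn; [|intros _; apply hv].
  intros hs hreg. apply hs, EminusH_regular_inl.
  - (* saturation: a regular vertex outside H emits an edge leaving H *)
    apply NNPP. intro hnone. apply hv, sH; [exact hreg|].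
    intros e he. apply NNPP. eauto.
  - apply (finite_mono _ _ (proj2 hreg)). tauto.
Qed.

Lemma EminusH_singular_inl v (hv : ~ H v) :
  singular E v -> ~ breaking E H v -> singular (EminusH E H hH) (inl (exist _ v hv)).
Proof.
  intros hs hnb [[x hx] [l hl]]. apply hnb. split; [exact hs|]. split.
  - exists (minus_emap x). split.
    + rewrite <- minus_sr_map, hx. reflexivity.
    + rewrite <- minus_rg_map. apply minus_vmap_notin.
  - exists (map minus_emap l). intros e he hne.
    change e with (minus_emap (inl (exist _ e hne))). apply in_map, hl.
    cbn. f_equal. apply subset_eq_compat. exact he.
Qed.

Lemma EminusH_singular_inr w : singular (EminusH E H hH) (inr w).
Proof. intros [[[[e he]|[e he]] hx] _]; discriminate. Qed.

Lemma EminusH_singular_not_breaking v (hv : ~ H v) :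
  singular (EminusH E H hH) (inl (exist _ v hv)) -> ~ breaking E H v.
Proof. intros hs hb. exact (hs (EminusH_regular_breaking v hv hb)). Qed.

Lemma minus_vmap_injective : injective_on (singular (EminusH E H hH)) minus_vmap.
Proof.
  intros [[v hv]|[v hv]] [[v' hv']|[v' hv']] hs hs' h; cbn in h; subst v'.
  - f_equal. apply subset_eq_compat. reflexivity.
  - exfalso. exact (EminusH_singular_not_breaking v hv hs hv').
  - exfalso. exact (EminusH_singular_not_breaking v hv' hs' hv).
  - f_equal. apply subset_eq_compat. reflexivity.
Qed.

Lemma minus_emap_injective_singular :
  injective_on (fun x => singular (EminusH E H hH) (rg _ x)) minus_emap.
Proof.
  intros [[e he]|[e he]] [[e' he']|[e' he']] hs hs' h; cbn in h; subst e'.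
  - f_equal. apply subset_eq_compat. reflexivity.
  - exfalso. exact (EminusH_singular_not_breaking _ he hs he').
  - exfalso. exact (EminusH_singular_not_breaking _ he' hs' he).
  - f_equal. apply subset_eq_compat. reflexivity.
Qed.

Lemma minus_emap_injective_emitting :
  injective_on (fun x => emits (EminusH E H hH) (rg _ x)) minus_emap.
Proof.
  intros [[e he]|[e he]] [[e' he']|[e' he']] [y hy] [y' hy'] h; cbn in h; subst e'.
  - f_equal. apply subset_eq_compat. reflexivity.
  - destruct y' as [[? ?]|[? ?]]; discriminate.
  - destruct y as [[? ?]|[? ?]]; discriminate.
  - destruct y as [[? ?]|[? ?]]; discriminate.
Qed.

Lemma EminusH_path_map_boundary (sH : saturated E H) b :
  is_boundary (EminusH E H hH) b -> is_boundary E (minus_path_map b).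
Proof.
  apply path_map_boundary;
    [exact minus_rg_map|exact minus_sr_map|exact (EminusH_singular_map sH)].
Qed.

Lemma EminusH_path_map_equiv b b' :
  is_boundary (EminusH E H hH) b -> is_boundary (EminusH E H hH) b' ->
  shift_tail_eq _ b b' <-> shift_tail_eq E (minus_path_map b) (minus_path_map b').
Proof.
  intros hb hb'. split; [apply path_map_shift_tail_eq, minus_rg_map|].
  apply shift_tail_eq_of_path_map; auto; [exact minus_rg_map|].
  intros x y hx hy h.
  rewrite (path_map_injective (EminusH E H hH) E minus_vmap minus_emap
    minus_emap_injective_emitting minus_emap_injective_singular minus_vmap_injective
    x y hx hy h).
  reflexivity.
Qed.

End EminusH.

Section Cover.
Variables (E : graph) (H : V E -> Prop) (hH : hereditary E H).

Definition eventually_in (a : rpath E) : Prop :=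
  match a with
  | rvert v => H v
  | rfin e l => H (rg E (last l e))
  | rinf f => exists n, H (rg E (f n))
  end.

Lemma eventually_in_shift a :
  is_boundary E a -> (eventually_in (shift E a) <-> eventually_in a).
Proof.
  destruct a as [v|e [|e' l]|f]; intro ha; cbn [shift eventually_in]; try reflexivity.
  - rewrite last_cons. reflexivity.
  - cbn in ha. split; intros [n hn]; [exists (S n); exact hn|].
    exists n. apply hH. rewrite <- ha. exact hn.
Qed.

Lemma eventually_in_shift_tail_eq a b :
  is_boundary E a -> is_boundary E b -> shift_tail_eq E a b ->
  (eventually_in a <-> eventually_in b).
Proof.
  assert (iter : forall n x, is_boundary E x ->
            (eventually_in (Nat.iter n (shift E) x) <-> eventually_in x)).
  { intros n x hx. induction n as [|n IH]; [reflexivity|].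
    rewrite Nat.iter_succ, eventually_in_shift, IH; [reflexivity|].
    apply iter_shift_boundary, hx. }
  intros ha hb [m [n h]]. rewrite <- (iter m a ha), <- (iter n b hb), h. reflexivity.
Qed.

Lemma Ebar_path_eventually_in b :
  is_boundary (Ebar E H hH) b -> eventually_in (bar_path_map E H hH b).
Proof.
  assert (hrg : forall x, H (bar_vmap E H (rg (Ebar E H hH) x))).
  { intros [[e he]|[a ha]]; [exact (hH e he)|exact (proj1 (proj2 ha))]. }
  destruct b as [[[v hv]|a]|e l|f]; cbn; intro hb.
  - exact hv.
  - destruct (hb (Ebar_regular_inr E H hH a)).
  - rewrite last_map, <- (bar_rg_map E H hH). apply hrg.
  - exists 0. rewrite <- (bar_rg_map E H hH). apply hrg.
Qed.

Lemma EminusH_path_not_eventually_in b : ~ eventually_in (minus_path_map E H hH b).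
Proof.
  destruct b as [v|e l|f]; cbn.
  - apply (minus_vmap_notin E H hH).
  - rewrite last_map, <- (minus_rg_map E H hH). apply (minus_vmap_notin E H hH).
  - intros [n hn]. rewrite <- (minus_rg_map E H hH) in hn.
    exact (minus_vmap_notin E H hH _ hn).
Qed.

Lemma Ebar_EminusH_images_disjoint (sH : saturated E H) b b' :
  is_boundary (Ebar E H hH) b -> is_boundary (EminusH E H hH) b' ->
  ~ shift_tail_eq E (bar_path_map E H hH b) (minus_path_map E H hH b').
Proof.
  intros hb hb' r. apply (EminusH_path_not_eventually_in b').
  apply (eventually_in_shift_tail_eq _ _ (Ebar_path_map_boundary E H hH b hb)
           (EminusH_path_map_boundary E H hH sH b' hb') r).
  apply Ebar_path_eventually_in, hb.
Qed.

Definition covered (a : rpath E) : Prop :=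
  (exists b, is_boundary (Ebar E H hH) b /\ shift_tail_eq E a (bar_path_map E H hH b)) \/
  (exists b, is_boundary (EminusH E H hH) b /\ shift_tail_eq E a (minus_path_map E H hH b)).

Lemma covered_shift_tail_eq a a' : shift_tail_eq E a a' -> covered a' -> covered a.
Proof.
  intros r [[b [hb r']]|[b [hb r']]]; [left|right]; exists b;
    split; auto; etransitivity; eauto.
Qed.

Lemma singular_vertex_covered v : singular E v -> covered (rvert v).
Proof.
  intro hs. destruct (classic (H v)) as [hv|hv].
  - left. exists (rvert (G := Ebar E H hH) (inl (exist _ v hv))).
    split; [apply Ebar_singular_inl, hs|reflexivity].
  - right. destruct (classic (breaking E H v)) as [hb|hb].
    + exists (rvert (G := EminusH E H hH) (inr (exist _ v hb))).
      split; [apply EminusH_singular_inr|reflexivity].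
    + exists (rvert (G := EminusH E H hH) (inl (exist _ v hv))).
      split; [apply EminusH_singular_inl; assumption|reflexivity].
Qed.

Lemma boundary_path_covered a : is_boundary E a -> covered a.
Proof.
  destruct a as [v|e l|f]; cbn; intro ha.
  - apply singular_vertex_covered, ha.
  - apply (covered_shift_tail_eq _ _ (shift_tail_eq_iter E _ (S (length l)))).
    rewrite iter_shift_rfin. apply singular_vertex_covered, ha.
  - destruct (classic (exists n, H (rg E (f n)))) as [[n hn]|hn].
    + left.
      assert (hsr : forall k, H (sr E (f (k + S n)))).
      { induction k as [|k IH]; cbn; rewrite <- ha; [exact hn|apply hH, IH]. }
      exists (rinf (G := Ebar E H hH) (fun k => inl (exist _ (f (k + S n)) (hsr k)))).
      split.
      * intro k. cbn. f_equal. apply subset_eq_compat. apply ha.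
      * exists (S n), 0. rewrite iter_shift_rinf. reflexivity.
    + right.
      assert (hrg : forall n, ~ H (rg E (f n))) by eauto.
      exists (rinf (G := EminusH E H hH) (fun n => inl (exist _ (f n) (hrg n)))).
      split.
      * intro k. cbn. f_equal. apply subset_eq_compat. apply ha.
      * reflexivity.
Qed.

End Cover.

Theorem lemma6p2 (E : graph) (H : V E -> Prop)
  (hH : hereditary E H) (sH : saturated E H) :
  card_eq (bclass E) (bclass (Ebar E H hH) + bclass (EminusH E H hH))%type.
Proof.
  apply (card_eq_classes_sum _ _ _ _ _ _ _ _ _
           (bar_path_map E H hH) (minus_path_map E H hH)).
  - apply Ebar_path_map_boundary.
  - apply EminusH_path_map_boundary, sH.
  - apply Ebar_path_map_equiv.
  - apply EminusH_path_map_equiv.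
  - apply Ebar_EminusH_images_disjoint, sH.
  - apply boundary_path_covered.
Qed.
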